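(* Let $D$ be a connection on a vector bundle $E$ with curvature $\kappa$ and $E_0=\ker\kappa$. Then $D$ is exact if and only if the complex $\Gamma(E_0)\xrightarrow{D}\Gamma(\Lambda^1\otimes E)\xrightarrow{D^\wedge}\Gamma(\Lambda^2\otimes E)$ is exact. In particular, if $D^\wedge:\Lambda^1\otimes E\to\Lambda^2\otimes E$ is injective, then $D$ is exact. Conversely, if $D$ is exact and $\kappa:E\to\Lambda^2\otimes E$ is injective, then $D^\wedge:\Lambda^1\otimes E\to\Lambda^2\otimes E$ is injective.
   Context: $D:E\to\Lambda^1\otimes E$ is a linear connection on a smooth vector bundle; $D^\wedge$ is the exterior covariant derivative $\phi_b{}^\alpha\mapsto D_{[a}\phi_{b]}{}^\alpha$; $\kappa=D^\wedge\circ D$ is the curvature (a bundle homomorphism, assumed of constant rank). $D$ is called exact if every section $\phi$ of $\Lambda^1\otimes E$ such that $D^\wedge\phi=\kappa(\psi)$ for some section $\psi$ of $E$ is of the form $\phi=D\eta$ for some section $\eta$ of $E$. All statements are understood locally (on sufficiently small open sets). *)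

(* Local-coordinate model of a connection on a vector bundle: since all
   statements are local, the base is an open set U of R^n ('rV[R]_n) and
   E is trivialised as U x R^k. *)
From HB Require Import structures.
From mathcomp Require Import all_boot all_order all_algebra.
From mathcomp Require Import all_classical all_reals all_analysis.
Set Implicit Arguments. Unset Strict Implicit. Unset Printing Implicit Defensive.
Import Order.TTheory GRing.Theory Num.Theory.
Import numFieldNormedType.Exports.
Local Open Scope classical_set_scope.
Local Open Scope ring_scope.

Section Conn.
Variables (R : realType) (n k : nat).
Notation pt := 'rV[R]_n.

Definition evec (i : 'I_n) : pt := delta_mx ord0 i.
Definition partial (i : 'I_n) (f : pt -> R) : pt -> R :=
  fun x => derive f x (evec i).

Fixpoint Ck (W : set pt) (m : nat) (f : pt -> R) : Prop :=
  match m with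
  | 0 => forall x, W x -> {for x, continuous f}
  | m'.+1 => (forall x, W x -> {for x, continuous f}) /\
             (forall i x, W x -> derivable f x (evec i)) /\
             (forall i, Ck W m' (partial i f))
  end.
Definition smooth_on (W : set pt) (f : pt -> R) := forall m, Ck W m f.

(* sections of E, Lambda^1 (x) E, Lambda^2 (x) E, and connection coefficients *)
Definition secE := 'I_k -> pt -> R.
Definition sec1 := 'I_n -> 'I_k -> pt -> R.
Definition sec2 := 'I_n -> 'I_n -> 'I_k -> pt -> R.
Definition connection := 'I_n -> 'I_k -> 'I_k -> pt -> R.

Definition smoothE W (e : secE) := forall al, smooth_on W (e al).
Definition smooth1 W (p : sec1) := forall a al, smooth_on W (p a al).
Definition smooth_conn W (A : connection) := forall a al be, smooth_on W (A a al be).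

Definition Dcov (A : connection) (e : secE) : sec1 :=
  fun a al x => partial a (e al) x + \sum_(be < k) A a al be x * e be x.

Definition Dwedge (A : connection) (p : sec1) : sec2 :=
  fun a b al x => 2^-1 * (partial a (p b al) x - partial b (p a al) x
     + \sum_(be < k) (A a al be x * p b be x - A b al be x * p a be x)).

(* curvature kappa = D^wedge o D, as a bundle endomorphism E -> Lambda^2 (x) E *)
Definition curv (A : connection) (a b : 'I_n) (al be : 'I_k) (x : pt) : R :=
  2^-1 * (partial a (A b al be) x - partial b (A a al be) x
     + \sum_(ga < k) (A a al ga x * A b ga be x - A b al ga x * A a ga be x)).
Definition kappa (A : connection) (e : secE) : sec2 :=
  fun a b al x => \sum_(be < k) curv A a b al be x * e be x.

Definition kappa_mx (A : connection) (x : pt)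
  : 'M[R]_(k, #|{: 'I_n * 'I_n * 'I_k}|) :=
  \matrix_(be < k, j < #|{: 'I_n * 'I_n * 'I_k}|)
     (let t := enum_val j in curv A t.1.1 t.1.2 t.2 be x).

Definition const_rank_curv (U : set pt) (A : connection) :=
  forall x y, U x -> U y -> \rank (kappa_mx A x) = \rank (kappa_mx A y).

(* D exact (as a statement about germs of sections over U) *)
Definition exact_conn (U : set pt) (A : connection) :=
  forall W : set pt, open W -> W `<=` U ->
  forall (p : sec1) (ps : secE), smooth1 W p -> smoothE W ps ->
  (forall a b al x, W x -> Dwedge A p a b al x = kappa A ps a b al x) ->
  forall x, W x -> exists V : set pt, [/\ open V, V x, V `<=` W &
    exists e : secE, smoothE V e /\
      forall a al y, V y -> p a al y = Dcov A e a al y].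

(* exactness of Gamma(E_0) --D--> Gamma(Lambda^1 (x) E) --D^wedge--> Gamma(Lambda^2 (x) E),
   E_0 = ker kappa *)
Definition complex_exact (U : set pt) (A : connection) :=
  forall W : set pt, open W -> W `<=` U ->
  forall p : sec1, smooth1 W p ->
  (forall a b al x, W x -> Dwedge A p a b al x = 0) ->
  forall x, W x -> exists V : set pt, [/\ open V, V x, V `<=` W &
    exists e : secE, [/\ smoothE V e,
      (forall a b al y, V y -> kappa A e a b al y = 0) &
      forall a al y, V y -> p a al y = Dcov A e a al y]].

Definition Dwedge_injective (U : set pt) (A : connection) :=
  forall W : set pt, open W -> W `<=` U ->
  forall p : sec1, smooth1 W p ->
  (forall a b al x, W x -> Dwedge A p a b al x = 0) ->
  forall a al x, W x -> p a al x = 0.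

Definition kappa_injective (U : set pt) (A : connection) :=
  forall x, U x -> forall v : 'I_k -> R,
  (forall a b al, \sum_(be < k) curv A a b al be x * v be = 0) ->
  forall be, v be = 0.

End Conn.

From HB Require Import structures.
From mathcomp Require Import all_boot all_order all_algebra.
From mathcomp Require Import all_classical all_reals all_analysis.
From mathcomp Require Import ring lra.
Set Implicit Arguments. Unset Strict Implicit. Unset Printing Implicit Defensive.
Import Order.TTheory GRing.Theory Num.Theory.
Import numFieldNormedType.Exports.
Local Open Scope classical_set_scope.
Local Open Scope ring_scope.

(** The curvature really is [D^wedge o D]: expanding [D^wedge (D eta)] in
    coordinates, the second derivatives of [eta] cancel by the symmetry of mixed
    partials (a consequence of the mean value theorem along coordinate lines),
    and what remains is [kappa eta].  Hence if [D^wedge phi = kappa psi] then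
    [phi - D psi] is [D^wedge]-closed, and [phi = D eta] locally iff
    [phi - D psi = D (eta - psi)]; conversely, a closed [phi = D eta] forces
    [kappa eta = D^wedge phi = 0], i.e. [eta] is a section of [E_0].  When
    [D^wedge] is injective closed forms vanish, and when [kappa] is injective
    [E_0 = 0], so every closed form is [D 0 = 0]. *)

Section Smoothness.
Variables (R : realType) (n : nat).
Notation pt := 'rV[R]_n.
Implicit Types (W : set pt) (f g : pt -> R).

Lemma open_near W x : open W -> W x -> \forall y \near x, W y.
Proof. by move=> oW Wx; apply: open_nbhs_nbhs. Qed.

Lemma near_eq_continuous f g x : (\forall y \near x, f y = g y) ->
  {for x, continuous f} -> {for x, continuous g}.
Proof.
move=> fg cf; rewrite /prop_for /continuous_at -(nbhs_singleton fg).
apply: cvg_trans cf; apply: (@near_eq_cvg _ _ (nbhs x)).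
by apply: filterS fg => y ->.
Qed.

Lemma Ck_continuous W m f x : Ck W m f -> W x -> {for x, continuous f}.
Proof. by case: m => [|m] /= => [cf|[cf _]]; apply: cf. Qed.

Lemma CkS_derivable W m f i x : Ck W m.+1 f -> W x -> derivable f x (evec R i).
Proof. by move=> /= [_ [df _]]; apply: df. Qed.

Lemma CkS_partial W m f i : Ck W m.+1 f -> Ck W m (partial i f).
Proof. by move=> /= [_ [_ pf]]. Qed.

Lemma CkSW W m f : Ck W m.+1 f -> Ck W m f.
Proof.
elim: m f => [|m IH] f /=; first by case.
by move=> [cf [df pf]]; split => //; split => // i; apply: IH.
Qed.

Lemma Ck_subset W V m f : V `<=` W -> Ck W m f -> Ck V m f.
Proof.
move=> VW; elim: m f => [|m IH] f /=; first by move=> cf x /VW; apply: cf.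
by move=> [cf [df pf]]; split => [x /VW|]; [|split => [i x /VW|i]]; auto.
Qed.

Lemma eq_Ck W m f g : open W -> (forall x, W x -> f x = g x) -> Ck W m f -> Ck W m g.
Proof.
move=> oW; have near_fg f' g' x : (forall y, W y -> f' y = g' y) -> W x ->
    \forall y \near x, f' y = g' y.
  by move=> fg Wx; apply: filterS (open_near oW Wx) => y /fg.
elim: m f g => [|m IH] f g fg /=.
  by move=> cf x Wx; apply: near_eq_continuous (cf x Wx); apply: near_fg.
move=> [cf [df pf]]; split; [|split].
- by move=> x Wx; apply: near_eq_continuous (cf x Wx); apply: near_fg.
- by move=> i x Wx; apply: near_eq_derivable (df i x Wx); apply: near_fg.
- move=> i; apply: IH (pf i) => x Wx.
  by apply: near_eq_derive; apply: near_fg.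
Qed.

Lemma Ck_cst W m (c : R) : Ck W m (fun=> c).
Proof.
elim: m c => [|m IH] c /=; first by move=> x _; exact: cst_continuous.
split; first by move=> x _; exact: cst_continuous.
split; first by move=> i x _; apply: derivable_cst.
move=> i; have -> : partial i (fun=> c) = fun=> 0.
  by apply/funext => y; rewrite /partial derive_cst.
exact: IH.
Qed.

Lemma CkD W m f g : open W -> Ck W m f -> Ck W m g -> Ck W m (f \+ g).
Proof.
move=> oW; elim: m f g => [|m IH] f g /=.
  by move=> cf cg x Wx; apply: continuousD; [exact: cf|exact: cg].
move=> [cf [df pf]] [cg [dg pg]]; split; [|split].
- by move=> x Wx; apply: continuousD; [exact: cf|exact: cg].
- by move=> i x Wx; apply: derivableD; [exact: df|exact: dg].
- move=> i; apply: eq_Ck oW _ (IH _ _ (pf i) (pg i)) => x Wx.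
  by rewrite /partial deriveD //; [exact: df|exact: dg].
Qed.

Lemma CkM W m f g : open W -> Ck W m f -> Ck W m g -> Ck W m (f \* g).
Proof.
move=> oW; elim: m f g => [|m IH] f g /=.
  by move=> cf cg x Wx; apply: continuousM; [exact: cf|exact: cg].
move=> Cf Cg; have Cf' := CkSW Cf; have Cg' := CkSW Cg.
move: Cf Cg => [cf [df pf]] [cg [dg pg]]; split; [|split].
- by move=> x Wx; apply: continuousM; [exact: cf|exact: cg].
- by move=> i x Wx; apply: derivableM; [exact: df|exact: dg].
- move=> i; apply: eq_Ck oW _ (CkD oW (IH _ _ Cf' (pg i)) (IH _ _ Cg' (pf i))).
  by move=> x Wx; rewrite /partial deriveM //; [exact: df|exact: dg].
Qed.

Lemma CkB W m f g : open W -> Ck W m f -> Ck W m g -> Ck W m (f \- g).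
Proof.
move=> oW Cf Cg; apply: eq_Ck oW _ (CkD oW Cf (CkM oW (Ck_cst W m (-1)) Cg)).
by move=> x _ /=; rewrite mulN1r.
Qed.

Lemma Ck_sum W m k (F : 'I_k -> pt -> R) : open W ->
  (forall i, Ck W m (F i)) -> Ck W m (fun x => \sum_(i < k) F i x).
Proof.
move=> oW; elim: k F => [|k IH] F CF.
  by apply: eq_Ck oW _ (Ck_cst W m 0) => x _; rewrite big_ord0.
apply: eq_Ck oW _ (CkD oW (IH (fun i => F (widen_ord (leqnSn k) i)) _) (CF ord_max)).
  by move=> x _; rewrite big_ord_recr.
by move=> i; apply: CF.
Qed.

End Smoothness.

Section SymmetryOfSecondDerivatives.
Variables (R : realType) (n : nat).
Notation pt := 'rV[R]_n.
Implicit Types (W : set pt) (f : pt -> R).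

Lemma is_derive_line f (y u : pt) (s : R) : derivable f (y + s *: u) u ->
  is_derive s 1 (fun t => f (y + t *: u)) (derive f (y + s *: u) u).
Proof.
have E : (fun h : R => h^-1 *: (((fun t => f (y + t *: u)) \o shift s) (h *: 1)
             - f (y + s *: u))) =
         (fun h => h^-1 *: ((f \o shift (y + s *: u)) (h *: u) - f (y + s *: u))).
  apply/funext => h /=; congr (_ *: (f _ - _)).
  rewrite /shift /= (_ : h%:A = h); last by rewrite -[RHS]mulr1.
  by rewrite scalerDl addrCA.
by move=> df; apply: DeriveDef; [rewrite /derivable E|rewrite /derive E].
Qed.

Lemma derivable_translate f (z w u : pt) : derivable f (z + w) u ->
  derivable (fun y => f (y + w)) z u /\
  derive (fun y => f (y + w)) z u = derive f (z + w) u.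
Proof.
have E : (fun h : R => h^-1 *: (((fun y => f (y + w)) \o shift z) (h *: u)
             - f (z + w))) =
         (fun h => h^-1 *: ((f \o shift (z + w)) (h *: u) - f (z + w))).
  by apply/funext => h /=; rewrite /shift /= addrA.
by move=> df; split; [rewrite /derivable E|rewrite /derive E].
Qed.

Lemma MVT_line f (y u : pt) (s : R) : 0 < s ->
  (forall t, 0 <= t <= s -> derivable f (y + t *: u) u) ->
  exists2 c, 0 < c < s & f (y + s *: u) - f y = derive f (y + c *: u) u * s.
Proof.
move=> s0 df.
have [t||c] := @MVT R (fun t => f (y + t *: u)) (fun t => derive f (y + t *: u) u) 0 s s0.
- by rewrite in_itv /= => /andP[t0 ts]; apply/is_derive_line/df; rewrite !ltW.
- apply: continuous_in_subspaceT => t; rewrite inE /= in_itv /= => tI.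
  have [dd _] := is_derive_line (df t tI).
  exact/differentiable_continuous/derivable1_diffP.
rewrite in_itv /= scale0r addr0 subr0 => cI ->.
by exists c.
Qed.

Lemma second_difference_MVT f W x i j (s t : R) : 0 < s -> 0 < t -> Ck W 2 f ->
  (forall a b, 0 <= a <= s -> 0 <= b <= t ->
     W (x + a *: evec R i + b *: evec R j)) ->
  exists c d, [/\ 0 < c < s, 0 < d < t &
   f (x + s *: evec R i + t *: evec R j) - f (x + s *: evec R i)
     - f (x + t *: evec R j) + f x
     = s * t * partial j (partial i f) (x + c *: evec R i + d *: evec R j)].
Proof.
set u := evec R i; set v := evec R j.
move=> s0 t0 Cf box.
have Wx0 a : 0 <= a <= s -> W (x + a *: u).
  by move=> ha; have := box a 0 ha; rewrite lexx ltW // scale0r addr0; exact.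
have dsh a : 0 <= a <= s -> derivable (fun z => f (z + t *: v)) (x + a *: u) u /\
    derive (fun z => f (z + t *: v)) (x + a *: u) u = partial i f (x + a *: u + t *: v).
  by move=> ha; apply/derivable_translate/(CkS_derivable Cf)/box; rewrite // lexx ltW.
have df a : 0 <= a <= s -> derivable f (x + a *: u) u.
  by move=> ha; apply: (CkS_derivable Cf (Wx0 a ha)).
have [c /andP[c0 cs] Ec] := @MVT_line ((fun z => f (z + t *: v)) - f) x u s s0
   (fun a ha => derivableB (dsh a ha).1 (df a ha)).
have hc : 0 <= c <= s by rewrite !ltW.
rewrite deriveB ?(dsh c hc).2 in Ec; last 2 first.
- exact: (dsh c hc).1.
- exact: df.
have [d /andP[d0 dt] Ed] := @MVT_line (partial i f) (x + c *: u) v t t0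
   (fun b hb => CkS_derivable (CkS_partial i Cf) (box c b hc hb)).
exists c, d; split; [by rewrite c0 cs|by rewrite d0 dt|].
have Ec' : f (x + s *: u + t *: v) - f (x + s *: u) - (f (x + t *: v) - f x)
   = (partial i f (x + c *: u + t *: v) - partial i f (x + c *: u)) * s := Ec.
rewrite /partial -/(partial i f) -/v.
transitivity (f (x + s *: u + t *: v) - f (x + s *: u) - (f (x + t *: v) - f x)).
  by ring.
by rewrite Ec' Ed; ring.
Qed.

Lemma norm_evec_le1 (i : 'I_n) : `|evec R i| <= 1.
Proof.
rewrite -[`|_|]/(mx_norm _) mx_normrE; apply: bigmax_le => // -[a b] _ /=.
by rewrite /evec mxE; case: (_ && _); rewrite ?normr0 ?normr1.
Qed.

Lemma near_box (P : pt -> Prop) (x : pt) : (\forall y \near x, P y) ->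
  exists2 d : R, 0 < d & forall a b i j, 0 <= a <= d -> 0 <= b <= d ->
    P (x + a *: evec R i + b *: evec R j).
Proof.
move=> /nbhs_ballP[del /= del0 Hb]; exists (del / 3); first by rewrite divr_gt0.
move=> a b i j /andP[a0 ad] /andP[b0 bd]; apply: Hb; rewrite -ball_normE /ball_ /=.
rewrite -addrA opprD addrA subrr sub0r normrN.
apply: le_lt_trans (ler_normD _ _) _; rewrite !normrZ !ger0_norm //.
have := norm_evec_le1 i; have := norm_evec_le1 j.
have := normr_ge0 (evec R i); have := normr_ge0 (evec R j); nra.
Qed.

Lemma ltW_itv (a b : R) : 0 < a < b -> 0 <= a <= b.
Proof. by move=> /andP[a0 ab]; rewrite (ltW a0) (ltW ab). Qed.

Lemma partialC f W x i j : open W -> Ck W 2 f -> W x ->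
  partial j (partial i f) x = partial i (partial j f) x.
Proof.
move=> oW Cf Wx; set F := partial j (partial i f); set G := partial i (partial j f).
have cF : {for x, continuous F} := Ck_continuous (CkS_partial j (CkS_partial i Cf)) Wx.
have cG : {for x, continuous G} := Ck_continuous (CkS_partial i (CkS_partial j Cf)) Wx.
apply/eqP; rewrite -subr_eq0 -normr_le0; apply/ler_addgt0Pr => e e0; rewrite add0r.
have e20 : 0 < e / 2 by rewrite divr_gt0.
have /near_box[d d0 box] :
    \forall y \near x, [/\ W y, `|F x - F y| < e / 2 & `|G x - G y| < e / 2].
  have nearF := @cvgr_dist_lt _ _ _ _ (nbhs_filter x) _ _ cF _ e20.
  have nearG := @cvgr_dist_lt _ _ _ _ (nbhs_filter x) _ _ cG _ e20.
  exact: (filterS3 (nbhs_filter x) (fun y => @And3 _ _ _) (open_near oW Wx) nearF nearG).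
have boxW a b i' j' : 0 <= a <= d -> 0 <= b <= d -> W (x + a *: evec R i' + b *: evec R j').
  by move=> ha hb; case: (box a b i' j' ha hb).
have [c [c' [ci c'i Ei]]] := second_difference_MVT d0 d0 Cf (fun a b => boxW a b i j).
have [b [b' [bi b'i Ej]]] := second_difference_MVT d0 d0 Cf (fun a b => boxW a b j i).
(* Both points compute the same second difference, taken in the two orders. *)
have EFG : F (x + c *: evec R i + c' *: evec R j) = G (x + b *: evec R j + b' *: evec R i).
  have dd0 : d * d != 0 by rewrite mulf_neq0 // gt_eqF.
  apply: (mulfI dd0).
  by rewrite -[LHS]Ei -[RHS]Ej (addrAC x (d *: evec R j)) [X in X + _ = _]addrAC.
have [_ nearF _] := box c c' i j (ltW_itv ci) (ltW_itv c'i).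
have [_ _ nearG] := box b b' j i (ltW_itv bi) (ltW_itv b'i).
rewrite EFG in nearF; rewrite distrC in nearG.
apply/ltW; rewrite [e]splitr.
exact: le_lt_trans (ler_distD _ _ _) (ltrD nearF nearG).
Qed.

End SymmetryOfSecondDerivatives.

Lemma sum_mulr_sum_exchange (K : ringType) k (a : 'I_k -> K) (b : 'I_k -> 'I_k -> K)
    (v : 'I_k -> K) :
  \sum_(be < k) a be * \sum_(ga < k) b be ga * v ga
  = \sum_(be < k) (\sum_(ga < k) a ga * b ga be) * v be.
Proof.
under eq_bigr do rewrite mulr_sumr.
under [RHS]eq_bigr do rewrite mulr_suml.
by rewrite exchange_big; apply: eq_bigr => be _; apply: eq_bigr => ga _; rewrite mulrA.
Qed.

(* [D^wedge (D v) = kappa v] at a point, for a fixed index alpha: [ddv_ab] and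
   [ddv_ba] are the two mixed second derivatives of v^alpha, [A_a be] stands for
   A_a^alpha_be, [AA_a be ga] for A_a^be_ga, and [dA_ab be] for d_a A_b^alpha_be. *)
Lemma Dwedge_Dcov_identity (K : comRingType) k (c ddv_ab ddv_ba : K)
    (dA_ab dA_ba A_a A_b v dv_a dv_b : 'I_k -> K) (AA_b AA_a : 'I_k -> 'I_k -> K) :
  ddv_ab = ddv_ba ->
  c * ((ddv_ab + \sum_(be < k) (dA_ab be * v be + A_b be * dv_a be))
     - (ddv_ba + \sum_(be < k) (dA_ba be * v be + A_a be * dv_b be))
     + \sum_(be < k) (A_a be * (dv_b be + \sum_(ga < k) AA_b be ga * v ga)
                   - A_b be * (dv_a be + \sum_(ga < k) AA_a be ga * v ga)))
  = \sum_(be < k) c * (dA_ab be - dA_ba be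
        + \sum_(ga < k) (A_a ga * AA_b ga be - A_b ga * AA_a ga be)) * v be.
Proof.
move=> <-.
have split_mul (w dw : 'I_k -> K) (M : 'I_k -> 'I_k -> K) :
    \sum_(be < k) w be * (dw be + \sum_(ga < k) M be ga * v ga)
    = \sum_(be < k) w be * dw be + \sum_(be < k) (\sum_(ga < k) w ga * M ga be) * v be.
  by rewrite -sum_mulr_sum_exchange -big_split; apply: eq_bigr => be _; rewrite mulrDr.
have regroup (P S1 S2 T1 T2 T3 T4 : K) :
    c * (P + S1 - (P + S2) + (T1 + T2 - (T3 + T4)))
    = c * ((S1 - S2) + ((T1 - T3) + (T2 - T4))) by ring.
rewrite sumrB !split_mul regroup -!sumrB -!big_split mulr_sumr /=.
by apply: eq_bigr => be _; rewrite sumrB; ring.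
Qed.

Section CovariantDerivative.
Variables (R : realType) (n k : nat).
Notation pt := 'rV[R]_n.
Implicit Types (A : connection R n k) (W V : set pt) (e : secE R n k) (p q : sec1 R n k).

Lemma smooth_conn_subset W V A : V `<=` W -> smooth_conn W A -> smooth_conn V A.
Proof. by move=> VW sA a al be m; apply: Ck_subset VW (sA a al be m). Qed.

Lemma smooth1_Dcov W A e : open W -> smooth_conn W A -> smoothE W e ->
  smooth1 W (Dcov A e).
Proof.
move=> oW sA se a al m; apply: (CkD oW (CkS_partial a (se al m.+1))).
apply: (Ck_sum (F := fun be x => A a al be x * e be x) oW) => be.
exact: CkM oW (sA a al be m) (se be m).
Qed.

Lemma partial_Dcov A e a b al x :
  (forall be, derivable (A b al be) x (evec R a)) ->
  (forall be, derivable (e be) x (evec R a)) ->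
  derivable (partial b (e al)) x (evec R a) ->
  partial a (Dcov A e b al) x = partial a (partial b (e al)) x
    + \sum_(be < k) (partial a (A b al be) x * e be x
                     + A b al be x * partial a (e be) x).
Proof.
move=> dA de dp.
have -> : Dcov A e b al = partial b (e al) + \sum_(be < k) (A b al be * e be).
  by apply/funext => y; rewrite /Dcov fct_sumE.
have dAe be := derivableM (dA be) (de be).
rewrite /partial (deriveD dp); last exact: derivable_sum.
rewrite derive_sum //; congr (_ + _); apply: eq_bigr => be _.
by rewrite (deriveM (dA be) (de be)) addrC mulrC.
Qed.

Lemma Dwedge_Dcov_at W A e x a b al : open W -> W x ->
  (forall a al be, Ck W 1 (A a al be)) -> (forall al, Ck W 2 (e al)) ->
  Dwedge A (Dcov A e) a b al x = kappa A e a b al x.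
Proof.
move=> oW Wx CA Ce.
have dA a' al' be c : derivable (A a' al' be) x (evec R c).
  exact: CkS_derivable (CA a' al' be) Wx.
have de al' c : derivable (e al') x (evec R c).
  exact: CkS_derivable (CkSW (Ce al')) Wx.
have dde b' al' c : derivable (partial b' (e al')) x (evec R c).
  exact: CkS_derivable (CkS_partial b' (Ce al')) Wx.
rewrite /Dwedge /kappa /curv (partial_Dcov (dA b al ^~ a) (de ^~ a) (dde b al a)).
rewrite (partial_Dcov (dA a al ^~ b) (de ^~ b) (dde a al b)).
apply: Dwedge_Dcov_identity.
exact: partialC b a oW (Ce al) Wx.
Qed.

Lemma Dwedge_eq_on A p q V y a b al : open V -> V y ->
  (forall a al z, V z -> p a al z = q a al z) ->
  Dwedge A p a b al y = Dwedge A q a b al y.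
Proof.
move=> oV Vy pq; rewrite /Dwedge /partial.
have dpq c be : derive (p c be) y = derive (q c be) y.
  apply/funext => v; apply: near_eq_derive.
  by apply: filterS (open_near oV Vy) => z /pq.
by rewrite !dpq; congr (_ * (_ + _)); apply: eq_bigr => be _; rewrite !pq.
Qed.

Lemma DwedgeB A p q x a b al :
  (forall c be d, derivable (p c be) x (evec R d)) ->
  (forall c be d, derivable (q c be) x (evec R d)) ->
  Dwedge A (fun c be => p c be \- q c be) a b al x
    = Dwedge A p a b al x - Dwedge A q a b al x.
Proof.
move=> dp dq; rewrite /Dwedge /partial.
have -> c be : (p c be \- q c be) = p c be - q c be by [].
rewrite !deriveB //.
have -> : \sum_(be < k) (A a al be x * (p b be x - q b be x)
           - A b al be x * (p a be x - q a be x))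
   = \sum_(be < k) (A a al be x * p b be x - A b al be x * p a be x)
   - \sum_(be < k) (A a al be x * q b be x - A b al be x * q a be x).
  by rewrite -sumrB; apply: eq_bigr => ? _; ring.
by ring.
Qed.

Lemma DcovD A e1 e2 a al y :
  derivable (e1 al) y (evec R a) -> derivable (e2 al) y (evec R a) ->
  Dcov A (fun be => e1 be \+ e2 be) a al y = Dcov A e1 a al y + Dcov A e2 a al y.
Proof.
move=> d1 d2; rewrite /Dcov /partial.
have -> : e1 al \+ e2 al = e1 al + e2 al by [].
rewrite deriveD //.
under eq_bigr do rewrite mulrDr.
by rewrite big_split /=; ring.
Qed.

End CovariantDerivative.

Section Exactness.
Variables (R : realType) (n k : nat) (U : set 'rV[R]_n) (A : connection R n k).
Hypothesis sA : smooth_conn U A.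

Lemma Dwedge_Dcov W e : open W -> W `<=` U -> smoothE W e ->
  forall a b al x, W x -> Dwedge A (Dcov A e) a b al x = kappa A e a b al x.
Proof.
move=> oW WU se a b al x Wx; apply: Dwedge_Dcov_at oW Wx _ _ => [a' al' be|al'].
- exact: smooth_conn_subset WU sA a' al' be 1%N.
- exact: se al' 2%N.
Qed.

Lemma Dwedge_closed_subDcov W p ps : open W -> W `<=` U ->
  smooth1 W p -> smoothE W ps ->
  (forall a b al x, W x -> Dwedge A p a b al x = kappa A ps a b al x) ->
  let q := fun a al => p a al \- Dcov A ps a al in
  smooth1 W q /\ forall a b al x, W x -> Dwedge A q a b al x = 0.
Proof.
move=> oW WU sp sps Dp q.
have sDps := smooth1_Dcov oW (smooth_conn_subset WU sA) sps.
split => [a al m|a b al x Wx]; first exact: CkB oW (sp a al m) (sDps a al m).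
rewrite DwedgeB => [|c be d|c be d]; last 2 first.
- exact: CkS_derivable (sp c be 1%N) Wx.
- exact: CkS_derivable (sDps c be 1%N) Wx.
by rewrite Dp // (Dwedge_Dcov oW WU sps _ _ _ Wx) subrr.
Qed.

Lemma exact_conn_complex_exact : exact_conn U A -> complex_exact U A.
Proof.
move=> exA W oW WU p sp Dp0 x Wx.
have kappa0 a b al y : kappa A (fun _ _ => 0) a b al y = 0.
  by rewrite /kappa big1 // => be _; rewrite mulr0.
have Dp_kappa0 a b al y : W y -> Dwedge A p a b al y = kappa A (fun _ _ => 0) a b al y.
  by move=> Wy; rewrite Dp0 // kappa0.
have [V [oV Vx VW [e [se pe]]]] :=
  exA W oW WU p (fun _ _ => 0) sp (fun al m => Ck_cst W m 0) Dp_kappa0 x Wx.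
exists V; split => //; exists e; split => // a b al y Vy.
rewrite -(Dwedge_Dcov oV (subset_trans VW WU) se a b al Vy).
by rewrite -(Dwedge_eq_on A a b al oV Vy pe) Dp0 //; apply: VW.
Qed.

Lemma complex_exact_exact_conn : complex_exact U A -> exact_conn U A.
Proof.
move=> cxA W oW WU p ps sp sps Dp x Wx.
have [sq Dq0] := Dwedge_closed_subDcov oW WU sp sps Dp.
have [V [oV Vx VW [e0 [se0 _ qe]]]] := cxA W oW WU _ sq Dq0 x Wx.
exists V; split => //; exists (fun be => ps be \+ e0 be); split.
  by move=> al m; apply: CkD oV (Ck_subset VW (sps al m)) (se0 al m).
move=> a al y Vy; rewrite DcovD.
- by rewrite -qe // subrKC.
- exact: CkS_derivable (sps al 1%N) (VW y Vy).
- exact: CkS_derivable (se0 al 1%N) Vy.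
Qed.

Lemma Dwedge_injective_exact_conn : Dwedge_injective U A -> exact_conn U A.
Proof.
move=> injA W oW WU p ps sp sps Dp x Wx.
have [sq Dq0] := Dwedge_closed_subDcov oW WU sp sps Dp.
exists W; split => //; exists ps; split => // a al y Wy.
by apply/eqP; rewrite -subr_eq0; apply/eqP; apply: (injA W oW WU _ sq Dq0).
Qed.

Lemma Dwedge_injective_of_exact : exact_conn U A -> kappa_injective U A ->
  Dwedge_injective U A.
Proof.
move=> /exact_conn_complex_exact cxA kinjA W oW WU p sp Dp0 a al x Wx.
have [V [oV Vx VW [e [se ke0 pe]]]] := cxA W oW WU p sp Dp0 x Wx.
have e0 be y : V y -> e be y = 0.
  by move=> Vy; apply: (kinjA y (WU y (VW y Vy)) (fun be => e be y)) => a' b' al'; apply: ke0.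
rewrite pe // /Dcov big1 => [|be _]; last by rewrite e0 // mulr0.
rewrite addr0 /partial (@near_eq_derive _ _ _ (e al) (cst 0)) ?derive_cst //.
by apply: filterS (open_near oV Vx) => z /e0.
Qed.

End Exactness.

Unset Implicit Arguments.

Theorem proposition2p4 (R : realType) (n k : nat) (U : set 'rV[R]_n)
  (A : connection R n k) :
  open U -> smooth_conn U A -> const_rank_curv U A ->
  (exact_conn U A <-> complex_exact U A) /\
  (Dwedge_injective U A -> exact_conn U A) /\
  (exact_conn U A -> kappa_injective U A -> Dwedge_injective U A).
Proof.
move=> _ sA _; split; [split|split].
- exact: exact_conn_complex_exact.
- exact: complex_exact_exact_conn.
- exact: Dwedge_injective_exact_conn.
- exact: Dwedge_injective_of_exact.
Qed.
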